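(* Let $\mathbb{H}$ be a Hilbert space with norm $\|\cdot\|$ and let $\mathcal{D}=\{\phi_j\}_{j\in\mathbb{N}^*}$ be an orthonormal basis of $\mathbb{H}$; set $\mathcal{D}_p=\{\phi_1,\dots,\phi_p\}$. Let $1<q<2$, $r>0$, $R>0$ and $f\in w\mathcal{L}_q(R)\cap\mathcal{B}^r_{2,\infty}(R)$. For $p\in\mathbb{N}^*$ and $\beta>0$ let $$f_{p,\beta}=\arg\min_{h\in\mathcal{L}_1(\mathcal{D}_p)}\big(\|f-h\|^2+\beta\|h\|_{\mathcal{L}_1(\mathcal{D}_p)}\big).$$ Then there exists $C_q>0$ depending only on $q$ such that for all $p\in\mathbb{N}^*$ and $\beta>0$, $$\|f_{p,\beta}\|_{\mathcal{L}_1(\mathcal{D}_p)}\le C_qR^q\beta^{1-q}\quad\text{and}\quad\|f-f_{p,\beta}\|\le R(p+1)^{-r}+\sqrt{C_q}\,R^{q/2}\beta^{1-q/2}.$$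
   Context: $\mathcal{L}_1(\mathcal{D}_p)$ is the span of $\phi_1,\dots,\phi_p$ with norm $\|h\|_{\mathcal{L}_1(\mathcal{D}_p)}=\inf\{\sum_{j=1}^p|\theta_j|:h=\sum_j\theta_j\phi_j\}$. Writing $g=\sum_{j\ge1}\theta_j\phi_j$: $g\in\mathcal{B}^r_{2,\infty}(R)$ iff $\sup_{J\in\mathbb{N}^*}\big(J^{2r}\sum_{j\ge J}\theta_j^2\big)\le R^2$; $g\in w\mathcal{L}_q(R)$ iff $\sup_{\eta>0}\big(\eta^q\sum_{j\ge1}\mathbf{1}\{|\theta_j|>\eta\}\big)\le R^q$. *)

From Stdlib Require Import Reals Lra.
From Coquelicot Require Import Coquelicot.
Open Scope R_scope.

(* The separable real Hilbert space H with orthonormal basis (phi_j)_{j>=1}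
   is represented by coordinates: an element g = sum_{j>=1} theta_j phi_j is
   the sequence theta : nat -> R, where only the indices j >= 1 matter
   (theta 0 is ignored). *)

Definition in_H (theta : nat -> R) : Prop :=
  ex_series (fun k => (theta (S k))²).

Definition Hnorm2 (theta : nat -> R) : R :=
  Series (fun k => (theta (S k))²).

Definition Hnorm (theta : nat -> R) : R := sqrt (Hnorm2 theta).

Definition Hsub (f h : nat -> R) : nat -> R := fun j => f j - h j.

Definition in_span (p : nat) (a : nat -> R) : Prop :=
  forall j, (1 <= j <= p)%nat \/ a j = 0.

(* ||h||_{L1(D_p)} = inf { sum_j |theta_j| : h = sum_{j<=p} theta_j phi_j };
   since D_p is orthonormal the representation is unique, so this is
   sum_{j=1}^p |a_j|. *)
Definition L1norm (p : nat) (a : nat -> R) : R :=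
  sum_n_m (fun j => Rabs (a j)) 1 p.

Definition besov (r Rad : R) (theta : nat -> R) : Prop :=
  forall J : nat, (1 <= J)%nat ->
    Rpower (INR J) (2 * r) * Series (fun k => (theta (J + k)%nat)²) <= Rad².

Definition count_big (eta : R) (theta : nat -> R) (n : nat) : R :=
  sum_n_m (fun j => if Rlt_dec eta (Rabs (theta j)) then 1 else 0) 1 n.

(* g in wL_q(R) : sup_{eta>0} eta^q #{j>=1 : |theta_j| > eta} <= R^q.
   The (possibly infinite) count is the increasing limit of the counts over
   {1,...,n}, so the bound is stated for every n. *)
Definition weakLq (q Rad : R) (theta : nat -> R) : Prop :=
  forall eta : R, 0 < eta -> forall n : nat,
    Rpower eta q * count_big eta theta n <= Rpower Rad q.

Definition objective (p : nat) (beta : R) (f h : nat -> R) : R :=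
  Hnorm2 (Hsub f h) + beta * L1norm p h.

Definition is_argmin (p : nat) (beta : R) (f h : nat -> R) : Prop :=
  in_span p h /\
  forall g, in_span p g -> objective p beta f h <= objective p beta f g.

(* The objective splits over the coordinates of D_p into (θ_j - a_j)^2 + β|a_j|,
   so f_{p,β} is the soft thresholding of θ_1, ..., θ_p at β/2.  Hence
   ‖f_{p,β}‖_{L1} = Σ_{j≤p} (|θ_j| - β/2)_+, while ‖f - f_{p,β}‖^2 is
   Σ_{j≤p} min(|θ_j|, β/2)^2 plus the tail Σ_{j>p} θ_j^2, which the Besov condition
   bounds by R^2 (p+1)^{-2r}.  Both finite sums are cut into dyadic layers
   |θ_j| ~ 2^{±k} β/2; the weak-ℓ_q condition bounds the number of coefficients above
   each level s by R^q s^{-q}, and the resulting series are geometric with ratios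
   2^{1-q} and 2^{q-2}, both < 1 since 1 < q < 2. *)

From Stdlib Require Import Reals Lra Lia Bool.
From Coquelicot Require Import Coquelicot.
Open Scope R_scope.

Lemma sum_n_m_Rmult_l (c : R) (u : nat -> R) (n m : nat) :
  sum_n_m (fun k => c * u k) n m = c * sum_n_m u n m.
Proof. exact (sum_n_m_mult_l c u n m). Qed.

Lemma sum_n_m_Rplus (u v : nat -> R) (n m : nat) :
  sum_n_m (fun k => u k + v k) n m = sum_n_m u n m + sum_n_m v n m.
Proof. exact (sum_n_m_plus u v n m). Qed.

Lemma sum_n_m_nonneg (a : nat -> R) (n m : nat) :
  (forall k, 0 <= a k) -> 0 <= sum_n_m a n m.
Proof.
  intros Ha. rewrite <- (Rmult_0_r (INR (S m - n))), <- sum_n_m_const.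
  now apply sum_n_m_le.
Qed.

Lemma sum_n_m_term_le (a : nat -> R) (n m j : nat) :
  (forall k, 0 <= a k) -> (n <= j <= m)%nat -> a j <= sum_n_m a n m.
Proof.
  intros Ha Hj. induction m as [|m IH].
  - replace j with 0%nat by lia; replace n with 0%nat by lia.
    rewrite sum_n_n; lra.
  - rewrite sum_n_Sm by lia. change (plus ?x ?y) with (x + y).
    destruct (Nat.eq_dec j (S m)) as [->|Hne].
    + pose proof (sum_n_m_nonneg a n m Ha); lra.
    + pose proof (IH ltac:(lia)); pose proof (Ha (S m)); lra.
Qed.

Lemma sum_n_m_swap (A : nat -> nat -> R) (n m n' m' : nat) :
  sum_n_m (fun j => sum_n_m (fun k => A j k) n' m') n m =
  sum_n_m (fun k => sum_n_m (fun j => A j k) n m) n' m'.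
Proof.
  induction m as [|m IH].
  - destruct n as [|n].
    + rewrite sum_n_n. apply sum_n_m_ext; intros k; now rewrite sum_n_n.
    + rewrite sum_n_m_zero by lia.
      rewrite (sum_n_m_ext _ (fun _ => zero)), sum_n_m_const_zero; [easy|].
      intros k; now rewrite sum_n_m_zero by lia.
  - destruct (Nat.le_gt_cases n (S m)) as [Hn|Hn].
    + rewrite sum_n_Sm, IH, <- sum_n_m_plus by lia.
      apply sum_n_m_ext; intros k; now rewrite sum_n_Sm.
    + rewrite sum_n_m_zero by lia.
      rewrite (sum_n_m_ext _ (fun _ => zero)), sum_n_m_const_zero; [easy|].
      intros k; now rewrite sum_n_m_zero by lia.
Qed.

Lemma telescope_le (g d : nat -> R) (K : nat) :
  (forall k, g k <= d k + g (S k)) -> g O <= sum_n_m d 0 K + g (S K).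
Proof.
  intros Hstep. induction K as [|K IH].
  - rewrite sum_n_n. apply Hstep.
  - rewrite sum_n_Sm by lia. change (plus ?x ?y) with (x + y).
    pose proof (Hstep (S K)); lra.
Qed.

Lemma sum_geom_le (rho : R) (K : nat) : 0 <= rho < 1 ->
  sum_n_m (fun k => rho ^ k) 0 K <= / (1 - rho).
Proof.
  intros Hrho. change (sum_n_m (fun k => rho ^ k) 0 K) with (sum_n (fun k => rho ^ k) K).
  rewrite sum_n_Reals, tech3 by lra.
  pose proof (pow_le rho (S K) (proj1 Hrho)).
  unfold Rdiv. rewrite <- (Rmult_1_l (/ (1 - rho))) at 2.
  apply Rmult_le_compat_r; [apply Rlt_le, Rinv_0_lt_compat|]; lra.
Qed.

Lemma le_of_le_plus_geom (x y c rho : R) : 0 <= rho < 1 ->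
  (forall K, x <= y + c * rho ^ K) -> x <= y.
Proof.
  intros Hrho Hx. apply Rle_plus_epsilon. intros eps Heps.
  set (M := Rabs c + 1).
  assert (HM : 0 < M) by (pose proof (Rabs_pos c); unfold M; lra).
  destruct (pow_lt_1_zero rho ltac:(rewrite Rabs_pos_eq; lra) (eps / M))
    as [N HN]; [apply Rdiv_lt_0_compat; lra|].
  specialize (HN N (le_n N)). specialize (Hx N).
  assert (Hsmall : M * Rabs (rho ^ N) <= eps).
  { apply (Rmult_lt_compat_l M) in HN; [|lra].
    replace (M * (eps / M)) with eps in HN by (field; lra). lra. }
  pose proof (Rle_abs (c * rho ^ N)) as Habs. rewrite Rabs_mult in Habs.
  pose proof (Rabs_pos (rho ^ N)). unfold M in Hsmall. nra.
Qed.

Lemma Rpower_gt_0 (x e : R) : 0 < Rpower x e.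
Proof. apply exp_pos. Qed.

Lemma Rpower_inv (x e : R) : 0 < x -> Rpower (/ x) e = Rpower x (- e).
Proof. intros Hx. unfold Rpower. rewrite ln_Rinv by lra. f_equal; ring. Qed.

Lemma Rpower_lt_1 (b e : R) : 0 < b < 1 -> 0 < e -> Rpower b e < 1.
Proof.
  intros Hb He. unfold Rpower. rewrite <- exp_0. apply exp_increasing.
  assert (ln b < 0) by (rewrite <- ln_1; apply ln_increasing; lra). nra.
Qed.

Lemma pow_mult_Rpower_opp (x e : R) (n : nat) :
  0 < x -> x ^ n * Rpower x (- e) = Rpower x (INR n - e).
Proof. intros Hx. unfold Rminus. now rewrite Rpower_plus, Rpower_pow. Qed.

Lemma Rpower_pow_mult (b t e : R) (k : nat) : 0 < b -> 0 < t ->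
  Rpower (b ^ k * t) e = Rpower b e ^ k * Rpower t e.
Proof.
  intros Hb Ht.
  rewrite <- (Rpower_mult_distr (b ^ k) t e) by (try apply pow_lt; lra).
  f_equal. rewrite <- (Rpower_pow k b), !Rpower_mult by lra.
  rewrite <- Rpower_pow by apply Rpower_gt_0. rewrite Rpower_mult. f_equal; ring.
Qed.

Definition ind_gt (s x : R) : R := if Rlt_dec s x then 1 else 0.

Lemma count_big_le (q Rad s : R) (f : nat -> R) (p : nat) :
  weakLq q Rad f -> 0 < s -> count_big s f p <= Rpower Rad q * Rpower s (- q).
Proof.
  intros W Hs. pose proof (W s Hs p) as Hw. pose proof (Rpower_gt_0 s q).
  rewrite Rpower_Ropp. apply (Rmult_le_reg_l (Rpower s q)); [easy|].
  replace (Rpower s q * (Rpower Rad q * / Rpower s q)) with (Rpower Rad q)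
    by (field; lra).
  exact Hw.
Qed.

Lemma weakLq_layers (q Rad : R) (f : nat -> R) (p K : nat) (c s : nat -> R) :
  weakLq q Rad f -> (forall k, 0 <= c k) -> (forall k, 0 < s k) ->
  sum_n_m (fun j => sum_n_m (fun k => c k * ind_gt (s k) (Rabs (f j))) 0 K) 1 p
  <= Rpower Rad q * sum_n_m (fun k => c k * Rpower (s k) (- q)) 0 K.
Proof.
  intros W Hc Hs. rewrite sum_n_m_swap, <- sum_n_m_Rmult_l.
  apply sum_n_m_le. intros k. rewrite sum_n_m_Rmult_l.
  change (sum_n_m (fun j => ind_gt (s k) (Rabs (f j))) 1 p) with (count_big (s k) f p).
  pose proof (count_big_le q Rad (s k) f p W (Hs k)). pose proof (Hc k). nra.
Qed.

(* Dyadic layer cake: [g k] telescopes into layers of height [c k] above the levels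
   [s k], and the weak-ℓ_q condition bounds each layer's total by R^q c_k s_k^{-q}. *)
Lemma weakLq_sum_layered (q Rad a rho rho' : R) (f : nat -> R) (p : nat)
    (g : nat -> R -> R) (c s : nat -> R) (e : R -> R) :
  weakLq q Rad f -> 0 <= rho < 1 -> 0 <= rho' < 1 ->
  (forall k, 0 <= c k) -> (forall k, 0 < s k) ->
  (forall k, c k * Rpower (s k) (- q) = a * rho ^ k) ->
  (forall k x, 0 <= x -> g k x <= c k * ind_gt (s k) x + g (S k) x) ->
  (forall k x, 0 <= x -> g k x <= rho' ^ k * e x) ->
  sum_n_m (fun j => g O (Rabs (f j))) 1 p <= Rpower Rad q * a / (1 - rho).
Proof.
  intros W Hrho Hrho' Hc Hs Hgeom Hstep Hrem.
  assert (Ha : 0 <= a).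
  { specialize (Hgeom O). rewrite pow_O, Rmult_1_r in Hgeom. rewrite <- Hgeom.
    pose proof (Hc O). pose proof (Rpower_gt_0 (s O) (- q)). nra. }
  apply (le_of_le_plus_geom _ _ (rho' * sum_n_m (fun j => e (Rabs (f j))) 1 p) rho' Hrho').
  intros K. eapply Rle_trans.
  { apply sum_n_m_le. intros j.
    apply (telescope_le (fun k => g k (Rabs (f j)))
             (fun k => c k * ind_gt (s k) (Rabs (f j))) K).
    intros k. apply Hstep, Rabs_pos. }
  rewrite sum_n_m_Rplus. apply Rplus_le_compat.
  - eapply Rle_trans; [now apply (weakLq_layers q Rad)|].
    replace (sum_n_m _ 0 K) with (a * sum_n_m (fun k => rho ^ k) 0 K)
      by (rewrite <- sum_n_m_Rmult_l; symmetry; apply sum_n_m_ext, Hgeom).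
    unfold Rdiv. rewrite Rmult_assoc.
    apply Rmult_le_compat_l; [apply Rlt_le, Rpower_gt_0|].
    apply Rmult_le_compat_l; [easy|]. now apply sum_geom_le.
  - eapply Rle_trans; [apply sum_n_m_le; intros j; apply Hrem, Rabs_pos|].
    rewrite sum_n_m_Rmult_l. apply Req_le. simpl. ring.
Qed.

Lemma Rmax_sub_step (u x : R) : 0 <= u ->
  Rmax (x - u) 0 <= u * ind_gt u x + Rmax (x - 2 * u) 0.
Proof. intros Hu. unfold Rmax, ind_gt. repeat destruct Rle_dec; destruct Rlt_dec; lra. Qed.

Lemma Rmax_sub_le_sq (u x : R) : 0 < u -> Rmax (x - u) 0 <= x ^ 2 / (4 * u).
Proof.
  intros Hu.
  assert (Hpos : 0 <= x ^ 2 / (4 * u)).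
  { apply Rmult_le_pos; [apply pow2_ge_0 | apply Rlt_le, Rinv_0_lt_compat; lra]. }
  assert (Hsub : x - u <= x ^ 2 / (4 * u)).
  { apply (Rmult_le_reg_r (4 * u)); [lra|].
    unfold Rdiv. rewrite Rmult_assoc, Rinv_l, Rmult_1_r by lra. pose proof (pow2_ge_0 (x - 2 * u)); nra. }
  unfold Rmax. destruct Rle_dec; lra.
Qed.

Lemma weakLq_sum_excess (q Rad t : R) (f : nat -> R) (p : nat) :
  1 < q -> weakLq q Rad f -> 0 < t ->
  sum_n_m (fun j => Rmax (Rabs (f j) - t) 0) 1 p <=
  Rpower Rad q * Rpower t (1 - q) / (1 - Rpower (/ 2) (q - 1)).
Proof.
  intros Hq W Ht.
  assert (Hs : forall k, 0 < 2 ^ k * t)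
    by (intros k; apply Rmult_lt_0_compat; [apply pow_lt|]; lra).
  replace (sum_n_m _ 1 p) with (sum_n_m (fun j => Rmax (Rabs (f j) - 2 ^ 0 * t) 0) 1 p)
    by (apply sum_n_m_ext; intros j; now rewrite pow_O, Rmult_1_l).
  apply (weakLq_sum_layered q Rad (Rpower t (1 - q)) (Rpower (/ 2) (q - 1)) (/ 2) f p
           (fun k x => Rmax (x - 2 ^ k * t) 0) (fun k => 2 ^ k * t) (fun k => 2 ^ k * t)
           (fun x => x ^ 2 / (4 * t)) W).
  - pose proof (Rpower_gt_0 (/ 2) (q - 1)).
    pose proof (Rpower_lt_1 (/ 2) (q - 1) ltac:(lra) ltac:(lra)). lra.
  - lra.
  - intros k; apply Rlt_le, Hs.
  - exact Hs.
  - intros k. rewrite <- (pow_1 (2 ^ k * t)) at 1.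
    rewrite pow_mult_Rpower_opp, Rpower_pow_mult, Rpower_inv by (auto; lra).
    replace (INR 1) with 1 by reflexivity. replace (- (q - 1)) with (1 - q) by ring. ring.
  - intros k x _. replace (2 ^ S k * t) with (2 * (2 ^ k * t)) by (simpl; ring).
    apply Rmax_sub_step, Rlt_le, Hs.
  - intros k x _. eapply Rle_trans; [apply Rmax_sub_le_sq, Hs|].
    apply Req_le. rewrite pow_inv. field. split; [lra | apply pow_nonzero; lra].
Qed.

Lemma Rmin_sq_step (v x : R) : 0 <= v -> 0 <= x ->
  Rmin x (2 * v) ^ 2 <= (2 * v) ^ 2 * ind_gt v x + Rmin x v ^ 2.
Proof. intros Hv Hx. unfold Rmin, ind_gt. repeat destruct Rle_dec; destruct Rlt_dec; nra. Qed.

Lemma Rmin_sq_le (x v : R) : 0 <= x -> 0 <= v -> Rmin x v ^ 2 <= v ^ 2.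
Proof. intros Hx Hv. unfold Rmin. destruct Rle_dec; nra. Qed.

Lemma weakLq_sum_min_sq (q Rad t : R) (f : nat -> R) (p : nat) :
  q < 2 -> weakLq q Rad f -> 0 < t ->
  sum_n_m (fun j => Rmin (Rabs (f j)) t ^ 2) 1 p <=
  Rpower Rad q * (4 * Rpower (t / 2) (2 - q)) / (1 - Rpower (/ 2) (2 - q)).
Proof.
  intros Hq W Ht.
  set (s := fun k => (/ 2) ^ k * (t / 2)).
  assert (Hs : forall k, 0 < s k)
    by (intros k; apply Rmult_lt_0_compat; [apply pow_lt|]; lra).
  assert (Hs0 : 2 * s O = t) by (unfold s; simpl; field).
  replace (sum_n_m _ 1 p) with (sum_n_m (fun j => Rmin (Rabs (f j)) (2 * s O) ^ 2) 1 p)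
    by (apply sum_n_m_ext; intros j; now rewrite Hs0).
  apply (weakLq_sum_layered q Rad (4 * Rpower (t / 2) (2 - q)) (Rpower (/ 2) (2 - q)) (/ 4) f p
           (fun k x => Rmin x (2 * s k) ^ 2) (fun k => (2 * s k) ^ 2) s
           (fun _ => t ^ 2) W).
  - pose proof (Rpower_gt_0 (/ 2) (2 - q)).
    pose proof (Rpower_lt_1 (/ 2) (2 - q) ltac:(lra) ltac:(lra)). lra.
  - lra.
  - intros k; apply pow2_ge_0.
  - exact Hs.
  - intros k. rewrite Rpow_mult_distr, Rmult_assoc, pow_mult_Rpower_opp by apply Hs.
    unfold s. rewrite Rpower_pow_mult by lra.
    replace (INR 2) with 2 by reflexivity. simpl. ring.
  - intros k x Hx. replace (2 * s (S k)) with (s k) by (unfold s; simpl; field).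
    apply Rmin_sq_step; [apply Rlt_le, Hs | exact Hx].
  - intros k x Hx. eapply Rle_trans; [apply Rmin_sq_le; [exact Hx | pose proof (Hs k); lra]|].
    apply Req_le. unfold s.
    replace (/ 4) with (/ 2 * / 2) by field. rewrite (Rpow_mult_distr (/ 2) (/ 2) k). simpl. field.
Qed.

Definition soft_threshold (t x : R) : R :=
  if Rle_dec x t then (if Rle_dec (- t) x then 0 else x + t) else x - t.

Lemma soft_threshold_optimal (t x c : R) : 0 < t ->
  (x - soft_threshold t x) ^ 2 + 2 * t * Rabs (soft_threshold t x)
  + (c - soft_threshold t x) ^ 2 <= (x - c) ^ 2 + 2 * t * Rabs c.
Proof.
  intros Ht. unfold soft_threshold.
  destruct (Rle_dec x t); [destruct (Rle_dec (- t) x)|];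
  unfold Rabs; repeat destruct Rcase_abs; nra.
Qed.

Lemma Rabs_soft_threshold (t x : R) : 0 < t ->
  Rabs (soft_threshold t x) = Rmax (Rabs x - t) 0.
Proof.
  intros Ht. unfold soft_threshold, Rmax.
  destruct (Rle_dec x t); [destruct (Rle_dec (- t) x)|];
  destruct Rle_dec; unfold Rabs in *; repeat destruct Rcase_abs; lra.
Qed.

Lemma soft_threshold_residual (t x : R) : 0 < t ->
  (x - soft_threshold t x) ^ 2 = Rmin (Rabs x) t ^ 2.
Proof.
  intros Ht. unfold soft_threshold, Rmin.
  destruct (Rle_dec x t); [destruct (Rle_dec (- t) x)|];
  destruct Rle_dec; unfold Rabs in *; repeat destruct Rcase_abs; nra.
Qed.

Lemma Hnorm2_Hsub_span (f h : nat -> R) (p : nat) :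
  (1 <= p)%nat -> in_H f -> in_span p h ->
  Hnorm2 (Hsub f h) = sum_n_m (fun j => (f j - h j)²) 1 p
                      + Series (fun k => (f (p + 1 + k)%nat)²).
Proof.
  intros Hp Hf Hh. unfold Hnorm2, Hsub.
  set (a := fun k => (f (S k) - h (S k))²).
  assert (Htail : forall k, a (p + k)%nat = (f (p + 1 + k)%nat)²).
  { intros k. unfold a. destruct (Hh (S (p + k))) as [Hc|Hc]; [lia|].
    rewrite Hc, Rminus_0_r. do 2 f_equal. lia. }
  assert (Ha : ex_series a).
  { apply (ex_series_incr_n a p), (ex_series_ext (fun k => (f (S (p + k)))²)).
    - intros k. rewrite Htail. do 2 f_equal. lia.
    - now apply (ex_series_incr_n (fun k => (f (S k))²) p) in Hf. }
  change (Series (fun k => (f (S k) - h (S k))²)) with (Series a).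
  rewrite (Series_incr_n a p), (Series_ext _ _ Htail) by (auto; lia).
  f_equal. rewrite <- sum_n_Reals. unfold sum_n.
  destruct p as [|p]; [lia|]. simpl Init.Nat.pred.
  now rewrite <- (sum_n_m_S (fun j => (f j - h j)²)).
Qed.

Lemma Series_tail_nonneg (f : nat -> R) (p : nat) :
  in_H f -> 0 <= Series (fun k => (f (p + 1 + k)%nat)²).
Proof.
  intros Hf. rewrite <- (Rmult_0_l (Series (fun k => (f (p + 1 + k)%nat)²))), <- Series_scal_l.
  apply Series_le.
  - intros k. rewrite Rmult_0_l. split; [lra | apply Rle_0_sqr].
  - apply (ex_series_ext (fun k => (f (S (p + k)))²)).
    + intros k. do 2 f_equal. lia.
    + now apply (ex_series_incr_n (fun k => (f (S k))²) p) in Hf.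
Qed.

Lemma is_argmin_soft_threshold (p : nat) (beta : R) (f h : nat -> R) :
  (1 <= p)%nat -> 0 < beta -> in_H f -> is_argmin p beta f h ->
  forall j, (1 <= j <= p)%nat -> h j = soft_threshold (beta / 2) (f j).
Proof.
  intros Hp Hbeta Hf [Hh Hmin].
  set (s := fun j => if (1 <=? j) && (j <=? p) then soft_threshold (beta / 2) (f j) else 0).
  assert (Hs : in_span p s).
  { intros j. unfold s. destruct (1 <=? j) eqn:E1, (j <=? p) eqn:E2; simpl; auto.
    left. apply Nat.leb_le in E1, E2. lia. }
  assert (Hgap : forall j, (f j - s j)² + beta * Rabs (s j) + (h j - s j)²
                           <= (f j - h j)² + beta * Rabs (h j)).
  { intros j. unfold s. destruct ((1 <=? j) && (j <=? p)) eqn:E.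
    - pose proof (soft_threshold_optimal (beta / 2) (f j) (h j) ltac:(lra)) as Hopt.
      replace (2 * (beta / 2)) with beta in Hopt by field.
      rewrite <- !Rsqr_pow2 in Hopt. lra.
    - destruct (Hh j) as [Hj|Hj].
      + apply andb_false_iff in E. destruct E as [E|E]; apply Nat.leb_gt in E; lia.
      + rewrite Hj, Rabs_R0. unfold Rsqr. nra. }
  specialize (Hmin s Hs). unfold objective, L1norm in Hmin.
  rewrite !(Hnorm2_Hsub_span f _ p Hp Hf) in Hmin by assumption.
  pose proof (sum_n_m_le _ _ 1 p Hgap) as Hsum.
  rewrite !sum_n_m_Rplus, !sum_n_m_Rmult_l in Hsum.
  intros j Hj.
  pose proof (sum_n_m_term_le (fun j => (h j - s j)²) 1 p j (fun k => Rle_0_sqr _) Hj).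
  assert (Hzero : (h j - s j)² = 0) by (pose proof (Rle_0_sqr (h j - s j)); lra).
  apply Rsqr_0_uniq in Hzero. unfold s in Hzero.
  replace ((1 <=? j) && (j <=? p)) with true in Hzero
    by (symmetry; apply andb_true_iff; split; apply Nat.leb_le; lia).
  lra.
Qed.

Lemma sqrt_Rpower (x e : R) : 0 < x -> sqrt (Rpower x e) = Rpower x (e / 2).
Proof.
  intros Hx. rewrite <- Rpower_sqrt, Rpower_mult by apply Rpower_gt_0. reflexivity.
Qed.

Lemma sqrt_plus_le (x y : R) : 0 <= x -> 0 <= y -> sqrt (x + y) <= sqrt x + sqrt y.
Proof.
  intros Hx Hy. pose proof (sqrt_pos x). pose proof (sqrt_pos y).
  rewrite <- (sqrt_pow2 (sqrt x + sqrt y)) by lra. apply sqrt_le_1_alt.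
  replace ((sqrt x + sqrt y) ^ 2)
    with (sqrt x * sqrt x + sqrt y * sqrt y + 2 * sqrt x * sqrt y) by ring.
  rewrite !sqrt_sqrt by lra. nra.
Qed.

Lemma besov_tail_le (r Rad : R) (f : nat -> R) (p : nat) :
  0 < Rad -> besov r Rad f ->
  sqrt (Series (fun k => (f (p + 1 + k)%nat)²)) <= Rad * Rpower (INR (p + 1)) (- r).
Proof.
  intros HRad B. specialize (B (p + 1)%nat ltac:(lia)).
  set (T := Series _) in *. set (N := INR (p + 1)) in *.
  assert (HN : 0 < N) by (apply lt_0_INR; lia).
  pose proof (Rpower_gt_0 N (2 * r)).
  assert (HT : T <= Rad² * Rpower N (- (2 * r))).
  { rewrite Rpower_Ropp. apply (Rmult_le_reg_l (Rpower N (2 * r))); [easy|].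
    replace (Rpower N (2 * r) * (Rad² * / Rpower N (2 * r))) with Rad² by (field; lra).
    exact B. }
  eapply Rle_trans; [apply sqrt_le_1_alt, HT|].
  rewrite sqrt_mult_alt, sqrt_Rsqr, sqrt_Rpower by (try apply Rle_0_sqr; lra).
  replace (- (2 * r) / 2) with (- r) by field. lra.
Qed.

Theorem lemma8p5 :
  forall q : R, 1 < q -> q < 2 ->
  exists Cq : R, 0 < Cq /\
    forall (r Rad : R) (f : nat -> R),
      0 < r -> 0 < Rad ->
      in_H f -> weakLq q Rad f -> besov r Rad f ->
      forall (p : nat) (beta : R) (fpb : nat -> R),
        (1 <= p)%nat -> 0 < beta ->
        is_argmin p beta f fpb ->
        L1norm p fpb <= Cq * Rpower Rad q * Rpower beta (1 - q) /\
        Hnorm (Hsub f fpb) <=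
          Rad * Rpower (INR (p + 1)) (- r)
          + sqrt Cq * Rpower Rad (q / 2) * Rpower beta (1 - q / 2).
Proof.
  intros q Hq1 Hq2.
  set (rhoA := Rpower (/ 2) (q - 1)). set (rhoB := Rpower (/ 2) (2 - q)).
  assert (HrhoA : 0 < rhoA < 1) by (split; [apply Rpower_gt_0 | apply Rpower_lt_1; lra]).
  assert (HrhoB : 0 < rhoB < 1) by (split; [apply Rpower_gt_0 | apply Rpower_lt_1; lra]).
  set (C1 := Rpower (/ 2) (1 - q) / (1 - rhoA)).
  set (C2 := 4 * rhoB * rhoB / (1 - rhoB)).
  assert (HC1 : 0 < C1) by (apply Rdiv_lt_0_compat; [apply Rpower_gt_0 | lra]).
  assert (HC2 : 0 < C2) by (apply Rdiv_lt_0_compat; nra).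
  exists (C1 + C2). split; [lra|].
  intros r Rad f Hr HRad Hf W B p beta h Hp Hbeta Hmin.
  pose proof (is_argmin_soft_threshold p beta f h Hp Hbeta Hf Hmin) as Hsoft.
  pose proof (Rpower_gt_0 Rad q) as HRq.
  assert (Hl1 : L1norm p h <= C1 * Rpower Rad q * Rpower beta (1 - q)).
  { unfold L1norm.
    rewrite (sum_n_m_ext_loc _ (fun j => Rmax (Rabs (f j) - beta / 2) 0))
      by (intros j Hj; rewrite Hsoft by exact Hj; apply Rabs_soft_threshold; lra).
    eapply Rle_trans; [apply (weakLq_sum_excess q Rad (beta / 2) f p); auto; lra|].
    apply Req_le. replace (beta / 2) with (beta * / 2) by field.
    rewrite <- Rpower_mult_distr by lra.
    fold rhoA. unfold C1. field. lra. }
  assert (Hres : sum_n_m (fun j => (f j - h j)²) 1 p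
                 <= C2 * Rpower Rad q * Rpower beta (2 - q)).
  { rewrite (sum_n_m_ext_loc _ (fun j => Rmin (Rabs (f j)) (beta / 2) ^ 2))
      by (intros j Hj; rewrite Hsoft, Rsqr_pow2 by exact Hj;
          apply soft_threshold_residual; lra).
    eapply Rle_trans; [apply (weakLq_sum_min_sq q Rad (beta / 2) f p); auto; lra|].
    apply Req_le. replace (beta / 2 / 2) with (beta * / 2 * / 2) by field.
    rewrite <- !Rpower_mult_distr by (try apply Rmult_lt_0_compat; lra).
    fold rhoB. unfold C2. field. lra. }
  split.
  - assert (0 < C2 * Rpower Rad q * Rpower beta (1 - q)).
    { apply Rmult_lt_0_compat; [now apply Rmult_lt_0_compat | apply Rpower_gt_0]. }
    lra.
  - unfold Hnorm. rewrite (Hnorm2_Hsub_span f h p) by (auto; apply Hmin).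
    rewrite Rplus_comm.
    eapply Rle_trans.
    { apply sqrt_plus_le; [now apply Series_tail_nonneg|].
      apply sum_n_m_nonneg. intros j; apply Rle_0_sqr. }
    apply Rplus_le_compat; [now apply besov_tail_le|].
    pose proof (Rpower_gt_0 beta (2 - q)).
    apply Rle_trans with (sqrt ((C1 + C2) * Rpower Rad q * Rpower beta (2 - q))).
    { apply sqrt_le_1_alt, (Rle_trans _ _ _ Hres).
      apply Rmult_le_compat_r; [lra|]. apply Rmult_le_compat_r; lra. }
    rewrite !sqrt_mult_alt, !sqrt_Rpower by (try apply Rmult_le_pos; lra).
    replace ((2 - q) / 2) with (1 - q / 2) by field. lra.
Qed.
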